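(* Let $(\mathfrak g,r)$ be a triangular Lie bialgebra. For $\mu\in\mathbb R$ define $R_\mu:\mathcal D(\mathfrak g)\to\mathcal D(\mathfrak g)$ by $R_\mu(x,a^* )=(\mu r(a^* )+x,-a^* )$, and let $\tilde r_{\pm,\mu}=R_\mu\varphi^{-1}\pm\varphi^{-1}:\mathcal D(\mathfrak g)^*\to\mathcal D(\mathfrak g)$, regarded as elements of $\mathcal D(\mathfrak g)\otimes\mathcal D(\mathfrak g)$. Then for each sign, $\tilde r_{\pm,\mu}$ is a solution of the CYBE in $\mathcal D(\mathfrak g)$ whose symmetric part is invariant and invertible (as a map $\mathcal D(\mathfrak g)^*\to\mathcal D(\mathfrak g)$); thus $(\mathcal D(\mathfrak g),\tilde r_{\pm,\mu})$, with cocommutator $\delta(X)=(\mathrm{ad}(X)\otimes\mathrm{id}+\mathrm{id}\otimes\mathrm{ad}(X))\tilde r_{\pm,\mu}$, is a factorizable quasitriangular Lie bialgebra.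
   Context: $\mathfrak g$ a finite-dimensional real Lie algebra; an element $t\in V\otimes V$ is identified with $t:V^*\to V$ via $\langle t(a),b\rangle=\langle a\otimes b,t\rangle$. $(\mathfrak g,r)$ triangular: $r\in\mathfrak g\otimes\mathfrak g$ is skew-symmetric and satisfies the CYBE $[r_{12},r_{13}]+[r_{12},r_{23}]+[r_{13},r_{23}]=0$ (for $r=\sum a_i\otimes b_i$: $[r_{12},r_{13}]=\sum[a_i,a_j]\otimes b_i\otimes b_j$, $[r_{12},r_{23}]=\sum a_i\otimes[b_i,a_j]\otimes b_j$, $[r_{13},r_{23}]=\sum a_i\otimes a_j\otimes[b_i,b_j]$). Coadjoint action $\langle\mathrm{ad}^*(x)a^*,y\rangle=-\langle a^*,[x,y]\rangle$; $[a^*,b^*]_\delta=\mathrm{ad}^*(r(a^* ))b^*-\mathrm{ad}^*(r(b^* ))a^*$; $\langle\mathrm{ad}^*(a^* )x,b^*\rangle=-\langle x,[a^*,b^*]_\delta\rangle$. The Drinfeld double $\mathcal D(\mathfrak g)=\mathfrak g\oplus\mathfrak g^*$ has bracket $[(x,a^* ),(y,b^* )]=([x,y]+\mathrm{ad}^*(a^* )y-\mathrm{ad}^*(b^* )x,[a^*,b^*]_\delta+\mathrm{ad}^*(x)b^*-\mathrm{ad}^*(y)a^* )$ and the nondegenerate symmetric invariant form $\mathfrak B_p((x,a^* ),(y,b^* ))=\langle a^*,y\rangle+\langle x,b^*\rangle$; $\varphi:\mathcal D(\mathfrak g)\to\mathcal D(\mathfrak g)^*$ is defined by $\mathfrak B_p(X,Y)=\langle\varphi(X),Y\rangle$.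 Symmetric part of $t$: $(t+\sigma(t))/2$; invariant means annihilated by $\mathrm{ad}(X)\otimes\mathrm{id}+\mathrm{id}\otimes\mathrm{ad}(X)$ for all $X$. *)

(* Coordinates: g = R^n (row vectors 'rV_n, standard basis e_i),
   g^* = R^n with the dual basis, D(g) = g (+) g^* = 'rV_(n+n), D(g)^* likewise
   (dual basis), tensors t in V (x) V as matrices (t = \sum_{ij} t i j e_i (x) e_j). *)
From HB Require Import structures.
From mathcomp Require Import all_boot all_order all_algebra.
Set Implicit Arguments. Unset Strict Implicit. Unset Printing Implicit Defensive.
Import Order.TTheory GRing.Theory Num.Theory.
Local Open Scope ring_scope.

Definition bvec {R : fieldType} {n : nat} (i : 'I_n) : 'rV[R]_n := delta_mx 0 i.

Definition brc (R : fieldType) (n : nat) (c : 'I_n -> 'I_n -> 'rV[R]_n)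
  (x y : 'rV[R]_n) : 'rV[R]_n :=
  \sum_(i < n) \sum_(j < n) (x 0 i * y 0 j) *: c i j.

(* natural pairing <a, x> between V^* and V (dual bases) *)
Definition pair (R : fieldType) (n : nat) (a x : 'rV[R]_n) : R :=
  \sum_(i < n) a 0 i * x 0 i.

Definition is_lie (R : fieldType) (n : nat) (br : 'rV[R]_n -> 'rV[R]_n -> 'rV[R]_n) : Prop :=
  (forall x, br x x = 0) /\
  (forall x y z, br x (br y z) + br y (br z x) + br z (br x y) = 0).

(* t in V (x) V viewed as t : V^* -> V, <t(a), b> = <a (x) b, t> *)
Definition tmap (R : fieldType) (n : nat) (t : 'M[R]_n) (a : 'rV[R]_n) : 'rV[R]_n :=
  a *m t.

Definition tensor_of (R : fieldType) (n : nat) (f : 'rV[R]_n -> 'rV[R]_n) : 'M[R]_n :=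
  \matrix_(i, j) f (bvec i) 0 j.

(* CYBE [t12,t13] + [t12,t23] + [t13,t23] = 0, component (p,q,s) *)
Definition cybe (R : fieldType) (n : nat) (br : 'rV[R]_n -> 'rV[R]_n -> 'rV[R]_n)
  (t : 'M[R]_n) : Prop :=
  forall p q s : 'I_n,
    \sum_(i < n) \sum_(k < n) t i q * t k s * br (bvec i) (bvec k) 0 p
  + \sum_(j < n) \sum_(k < n) t p j * t k s * br (bvec j) (bvec k) 0 q
  + \sum_(j < n) \sum_(l < n) t p j * t q l * br (bvec j) (bvec l) 0 s = 0.

Definition coad (R : fieldType) (n : nat) (br : 'rV[R]_n -> 'rV[R]_n -> 'rV[R]_n)
  (x a : 'rV[R]_n) : 'rV[R]_n :=
  \row_j (- pair a (br x (bvec j))).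

Definition brd (R : fieldType) (n : nat) (br : 'rV[R]_n -> 'rV[R]_n -> 'rV[R]_n)
  (r : 'M[R]_n) (a b : 'rV[R]_n) : 'rV[R]_n :=
  coad br (tmap r a) b - coad br (tmap r b) a.

Definition coad_star (R : fieldType) (n : nat) (br : 'rV[R]_n -> 'rV[R]_n -> 'rV[R]_n)
  (r : 'M[R]_n) (a x : 'rV[R]_n) : 'rV[R]_n :=
  \row_j (- pair (brd br r a (bvec j)) x).

(* Drinfeld double bracket on D(g) = g (+) g^*, X = (lsubmx X, rsubmx X) *)
Definition dbr (R : fieldType) (n : nat) (br : 'rV[R]_n -> 'rV[R]_n -> 'rV[R]_n)
  (r : 'M[R]_n) (X Y : 'rV[R]_(n + n)) : 'rV[R]_(n + n) :=
  let x := lsubmx X in let a := rsubmx X in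
  let y := lsubmx Y in let b := rsubmx Y in
  row_mx (br x y + coad_star br r a y - coad_star br r b x)
         (brd br r a b + coad br x b - coad br y a).

Definition Bp {R : fieldType} {n : nat} (X Y : 'rV[R]_(n + n)) : R :=
  pair (rsubmx X) (lsubmx Y) + pair (lsubmx X) (rsubmx Y).

Definition Bp_mx (R : fieldType) (n : nat) : 'M[R]_(n + n) :=
  \matrix_(i, j) Bp (bvec i) (bvec j).

Definition phi (R : fieldType) (n : nat) (X : 'rV[R]_(n + n)) : 'rV[R]_(n + n) :=
  X *m Bp_mx R n.
Definition phi_inv (R : fieldType) (n : nat) (xi : 'rV[R]_(n + n)) : 'rV[R]_(n + n) :=
  xi *m invmx (Bp_mx R n).

Definition Rmu (R : fieldType) (n : nat) (r : 'M[R]_n) (mu : R)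
  (X : 'rV[R]_(n + n)) : 'rV[R]_(n + n) :=
  row_mx (mu *: tmap r (rsubmx X) + lsubmx X) (- rsubmx X).

(* r~_{+,mu} (sg = true) and r~_{-,mu} (sg = false) as maps D^* -> D *)
Definition rtilde_map (R : fieldType) (n : nat) (r : 'M[R]_n) (mu : R) (sg : bool)
  (xi : 'rV[R]_(n + n)) : 'rV[R]_(n + n) :=
  Rmu r mu (phi_inv xi) + (if sg then phi_inv xi else - phi_inv xi).

Definition symp (R : fieldType) (m : nat) (t : 'M[R]_m) : 'M[R]_m :=
  (2%:R)^-1 *: (t + t^T).

Definition ad_act (R : fieldType) (m : nat) (br : 'rV[R]_m -> 'rV[R]_m -> 'rV[R]_m)
  (X : 'rV[R]_m) (t : 'M[R]_m) : 'M[R]_m :=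
  \matrix_(p, q) (\sum_(i < m) t i q * br X (bvec i) 0 p
                + \sum_(j < m) t p j * br X (bvec j) 0 q).

Definition invariant (R : fieldType) (m : nat) (br : 'rV[R]_m -> 'rV[R]_m -> 'rV[R]_m)
  (t : 'M[R]_m) : Prop := forall X, ad_act br X t = 0.

(* quasitriangular: CYBE + invariant symmetric part; factorizable: moreover the
   symmetric part, as a map V^* -> V (a |-> a *m s), is invertible *)
Definition factorizable_qt (R : fieldType) (m : nat)
  (br : 'rV[R]_m -> 'rV[R]_m -> 'rV[R]_m) (t : 'M[R]_m) : Prop :=
  [/\ cybe br t, invariant br (symp t) & symp t \in unitmx].

(* The bracket of g enters only through
   the trilinear form  kform a x y = <a, [x, y]>  on g^* x g x g, and pairing an
   element of D(g)^* with a bracket of D(g) is an explicit linear combination of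
   values of kform (dbr_pairing); in particular it is bilinear.  For any
   bilinear bracket, the CYBE for a tensor t is equivalent to a trilinear
   identity cybe_form t x1 x2 x3 = 0 in the map t (cybe_formE).  Applied to g
   and the skew tensor r it yields the identity cybe_triangular.

   Since phi^-1 is the swap matrix S of B_p, r~_{+,mu} is the block matrix
   (a, b) |-> (mu a r + 2 b, 0) and r~_{-,mu} is (a, b) |-> (mu a r, - 2 a)
   (rtilde_mapE).  Their CYBE reduces, after expansion in kform, to
   cybe_triangular and the antisymmetry of the bracket (rtilde_cybe).  Their
   symmetric part is +S resp. -S (symp_rtilde): it is invertible because
   S^2 = 1, and invariant because B_p is ad-invariant (swap_invariant). *)

From Pilot Require Import Defs.
From HB Require Import structures.
From mathcomp Require Import all_boot all_order all_algebra ring.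
Import Order.TTheory GRing.Theory Num.Theory.
Set Implicit Arguments. Unset Strict Implicit. Unset Printing Implicit Defensive.
Local Open Scope ring_scope.

Section LinearForms.
Variables (R : fieldType) (m : nat).

(* Linearity of a form on row vectors, in the single-equation shape that is
   convenient to check and to rewrite with. *)
Definition lin_form (g : 'rV[R]_m -> R) : Prop :=
  forall k x y, g (k *: x + y) = k * g x + g y.

Section OneForm.
Variable g : 'rV[R]_m -> R.
Hypothesis g_lin : lin_form g.

Lemma lin_form0 : g 0 = 0.
Proof.
have h := g_lin 1 0 0; rewrite scaler0 addr0 mul1r in h.
by apply: (addrI (g 0)); rewrite addr0 -h.
Qed.

Lemma lin_formD x y : g (x + y) = g x + g y.
Proof. by rewrite -{1}[x]scale1r g_lin mul1r. Qed.

Lemma lin_formZ k x : g (k *: x) = k * g x.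
Proof. by rewrite -[k *: x]addr0 g_lin lin_form0 addr0. Qed.

Lemma lin_formN x : g (- x) = - g x.
Proof. by rewrite -scaleN1r lin_formZ mulN1r. Qed.

Lemma lin_expand b : g b = \sum_(j < m) b 0 j * g (bvec j).
Proof.
rewrite {1}(row_sum_delta b) (big_morph g lin_formD lin_form0).
by apply: eq_bigr => j _; rewrite lin_formZ.
Qed.

End OneForm.

Lemma lin_form_add (g h : 'rV[R]_m -> R) :
  lin_form g -> lin_form h -> lin_form (fun x => g x + h x).
Proof. by move=> Hg Hh k x y; rewrite Hg Hh mulrDr addrACA. Qed.

Lemma pair_linl x : lin_form (fun a => pair a x).
Proof.
move=> k a b; rewrite /pair mulr_sumr -big_split.
by apply: eq_bigr => i _; rewrite !mxE mulrDl mulrA.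
Qed.

Lemma pairC (a x : 'rV[R]_m) : pair a x = pair x a.
Proof. by apply: eq_bigr => i _; rewrite mulrC. Qed.

Lemma pair_linr a : lin_form (pair a).
Proof. by move=> k x y; rewrite !(pairC a) pair_linl. Qed.

Lemma pairDr (a x y : 'rV[R]_m) : pair a (x + y) = pair a x + pair a y.
Proof. exact: (lin_formD (pair_linr a) x y). Qed.

Lemma pairNr (a x : 'rV[R]_m) : pair a (- x) = - pair a x.
Proof. exact: (lin_formN (pair_linr a) x). Qed.

Lemma pair_bvec i (x : 'rV[R]_m) : pair (bvec i) x = x 0 i.
Proof.
rewrite /pair (bigD1 i) //= big1 ?addr0 => [|j /negPf ji].
  by rewrite /bvec mxE !eqxx mul1r.
by rewrite /bvec mxE ji andbF mul0r.
Qed.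

Lemma pair_rowmx (a b x y : 'rV[R]_m) :
  pair (row_mx a b) (row_mx x y) = pair a x + pair b y.
Proof.
rewrite /pair big_split_ord /=.
by congr (_ + _); apply: eq_bigr => i _; rewrite ?row_mxEl ?row_mxEr.
Qed.

Lemma row_of_col (A : 'M[R]_m) q : \row_i A i q = bvec q *m A^T.
Proof. by apply/rowP => i; rewrite /bvec -rowE !mxE. Qed.

Lemma row_of_row (A : 'M[R]_m) p : \row_j A p j = bvec p *m A.
Proof. by apply/rowP => i; rewrite /bvec -rowE !mxE. Qed.

Lemma bilin_sum (H : 'rV[R]_m -> 'rV[R]_m -> R) :
  (forall y, lin_form (fun x => H x y)) -> (forall x, lin_form (H x)) ->
  forall f g : 'I_m -> R,
  \sum_(i < m) \sum_(k < m) f i * g k * H (bvec i) (bvec k) =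
  H (\row_i f i) (\row_k g k).
Proof.
move=> Hl Hr f g; rewrite [RHS](lin_expand (Hl _)).
apply: eq_bigr => i _; rewrite mxE (lin_expand (Hr _)) mulr_sumr.
by apply: eq_bigr => k _; rewrite mxE mulrA.
Qed.

End LinearForms.

Section TensorIdentities.
Variables (R : fieldType) (m : nat) (br : 'rV[R]_m -> 'rV[R]_m -> 'rV[R]_m).
Hypothesis br_linr : forall z x, lin_form (fun y => pair z (br x y)).

Lemma ad_act_pairing X t p q :
  ad_act br X t p q =
  pair (bvec p) (br X (bvec q *m t^T)) + pair (bvec q) (br X (bvec p *m t)).
Proof.
rewrite mxE -row_of_col -row_of_row !(lin_expand (br_linr _ X)).
by congr (_ + _); apply: eq_bigr => i _; rewrite mxE pair_bvec.
Qed.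

Lemma invariantZ k t : Defs.invariant br t -> Defs.invariant br (k *: t).
Proof.
move=> inv_t X; apply/matrixP => p q.
have /matrixP/(_ p q) := inv_t X; rewrite !mxE => e.
rewrite -[RHS](mulr0 k) -[X in k * X]e mulrDr !mulr_sumr.
by congr (_ + _); apply: eq_bigr => i _; rewrite mxE mulrA.
Qed.

Hypothesis br_linl : forall z y, lin_form (fun x => pair z (br x y)).

(* The CYBE [t12,t13] + [t12,t23] + [t13,t23] paired with x1 (x) x2 (x) x3. *)
Definition cybe_form (t : 'M[R]_m) (x1 x2 x3 : 'rV[R]_m) : R :=
  pair x1 (br (x2 *m t^T) (x3 *m t^T)) + pair x2 (br (x1 *m t) (x3 *m t^T))
  + pair x3 (br (x1 *m t) (x2 *m t)).

Lemma cybe_component p (f g : 'I_m -> R) :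
  \sum_(i < m) \sum_(k < m) f i * g k * br (bvec i) (bvec k) 0 p =
  pair (bvec p) (br (\row_i f i) (\row_k g k)).
Proof.
rewrite -(bilin_sum (br_linl (bvec p)) (br_linr (bvec p))).
by apply: eq_bigr => i _; apply: eq_bigr => k _; rewrite pair_bvec.
Qed.

Lemma lin_form_mull z y (A : 'M[R]_m) : lin_form (fun x => pair z (br (x *m A) y)).
Proof. by move=> k x x'; rewrite mulmxDl -scalemxAl br_linl. Qed.

Lemma lin_form_mulr z x (A : 'M[R]_m) : lin_form (fun y => pair z (br x (y *m A))).
Proof. by move=> k y y'; rewrite mulmxDl -scalemxAl br_linr. Qed.

(* The components of the CYBE are the values of cybe_form on basis vectors,
   and cybe_form is trilinear, so the CYBE holds iff cybe_form vanishes. *)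
Lemma cybe_formE t :
  cybe br t <-> forall x1 x2 x3, cybe_form t x1 x2 x3 = 0.
Proof.
have basis p q s : cybe_form t (bvec p) (bvec q) (bvec s) =
  \sum_(i < m) \sum_(k < m) t i q * t k s * br (bvec i) (bvec k) 0 p
  + \sum_(j < m) \sum_(k < m) t p j * t k s * br (bvec j) (bvec k) 0 q
  + \sum_(j < m) \sum_(l < m) t p j * t q l * br (bvec j) (bvec l) 0 s.
  by rewrite !cybe_component !row_of_col !row_of_row.
split=> [cyb x1 x2 x3 | H p q s]; last by rewrite -basis H.
have lin1 y z : lin_form (fun x => cybe_form t x y z).
  apply: lin_form_add; first apply: lin_form_add.
  - exact: pair_linl.
  - exact: lin_form_mull.
  - exact: lin_form_mull.
have lin2 x z : lin_form (fun y => cybe_form t x y z).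
  apply: lin_form_add; first apply: lin_form_add.
  - exact: lin_form_mull.
  - exact: pair_linl.
  - exact: lin_form_mulr.
have lin3 x y : lin_form (fun z => cybe_form t x y z).
  apply: lin_form_add; first apply: lin_form_add.
  - exact: lin_form_mulr.
  - exact: lin_form_mulr.
  - exact: pair_linl.
rewrite (lin_expand (lin1 x2 x3)) big1 // => p _.
rewrite (lin_expand (lin2 _ x3)) big1 ?mulr0 // => q _.
rewrite (lin_expand (lin3 _ _)) big1 ?mulr0 // => s _.
by rewrite basis cyb mulr0.
Qed.

End TensorIdentities.

Section StructureForm.
Variables (R : fieldType) (n : nat) (c : 'I_n -> 'I_n -> 'rV[R]_n).

Lemma brc_linl y k (x x' : 'rV[R]_n) :
  brc c (k *: x + x') y = k *: brc c x y + brc c x' y.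
Proof.
rewrite /brc scaler_sumr -big_split; apply: eq_bigr => i _.
rewrite scaler_sumr -big_split; apply: eq_bigr => j _.
by rewrite !mxE mulrDl scalerDl scalerA mulrA.
Qed.

Lemma brc_linr x k (y y' : 'rV[R]_n) :
  brc c x (k *: y + y') = k *: brc c x y + brc c x y'.
Proof.
rewrite /brc scaler_sumr -big_split; apply: eq_bigr => i _.
rewrite scaler_sumr -big_split; apply: eq_bigr => j _.
by rewrite !mxE mulrDr scalerDl scalerA mulrCA.
Qed.

Lemma brc_anti : is_lie (brc c) -> forall x y, brc c y x = - brc c x y.
Proof.
move=> [alt _] x y.
have brcDl u u' v : brc c (u + u') v = brc c u v + brc c u' v.
  by rewrite -{1}[u]scale1r brc_linl scale1r.
have brcDr u v v' : brc c u (v + v') = brc c u v + brc c u v'.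
  by rewrite -{1}[v]scale1r brc_linr scale1r.
have := alt (x + y); rewrite brcDl !brcDr !alt add0r addr0.
by move/eqP; rewrite addrC addr_eq0 => /eqP.
Qed.

(* The trilinear form <a, [x, y]>: every pairing with a bracket of D(g)
   is expressed through it. *)
Definition kform (a x y : 'rV[R]_n) : R := pair a (brc c x y).

Lemma kform_linl x y : lin_form (fun a => kform a x y).
Proof. exact: pair_linl. Qed.
Lemma kform_linm a y : lin_form (fun x => kform a x y).
Proof. by move=> k x x'; rewrite /kform brc_linl pair_linr. Qed.
Lemma kform_linr a x : lin_form (kform a x).
Proof. by move=> k y y'; rewrite /kform brc_linr pair_linr. Qed.

Lemma kform_anti : is_lie (brc c) -> forall a x y, kform a x y = - kform a y x.
Proof. by move=> lie a x y; rewrite /kform (brc_anti lie y) pairNr. Qed.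

Lemma kformDl a a' x y : kform (a + a') x y = kform a x y + kform a' x y.
Proof. exact: (lin_formD (kform_linl x y) a a'). Qed.
Lemma kformDm a x x' y : kform a (x + x') y = kform a x y + kform a x' y.
Proof. exact: (lin_formD (kform_linm a y) x x'). Qed.
Lemma kformDr a x y y' : kform a x (y + y') = kform a x y + kform a x y'.
Proof. exact: (lin_formD (kform_linr a x) y y'). Qed.
Lemma kformZl k a x y : kform (k *: a) x y = k * kform a x y.
Proof. exact: (lin_formZ (kform_linl x y) k a). Qed.
Lemma kformZm k a x y : kform a (k *: x) y = k * kform a x y.
Proof. exact: (lin_formZ (kform_linm a y) k x). Qed.
Lemma kformZr k a x y : kform a x (k *: y) = k * kform a x y.
Proof. exact: (lin_formZ (kform_linr a x) k y). Qed.
Lemma kformNl a x y : kform (- a) x y = - kform a x y.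
Proof. exact: (lin_formN (kform_linl x y) a). Qed.
Lemma kformNm a x y : kform a (- x) y = - kform a x y.
Proof. exact: (lin_formN (kform_linm a y) x). Qed.
Lemma kformNr a x y : kform a x (- y) = - kform a x y.
Proof. exact: (lin_formN (kform_linr a x) y). Qed.
Lemma kform0l x y : kform 0 x y = 0.
Proof. exact: (lin_form0 (kform_linl x y)). Qed.
Lemma kform0m a y : kform a 0 y = 0.
Proof. exact: (lin_form0 (kform_linm a y)). Qed.
Lemma kform0r a x : kform a x 0 = 0.
Proof. exact: (lin_form0 (kform_linr a x)). Qed.

End StructureForm.

(* Normalize a polynomial in values of kform: push sums, scalings and signs of
   the arguments (including those under a right factor *m r) out of kform;
   the result is then closed by ring. *)
Ltac kform_expand := rewrite ?(mulmxDl, mulNmx, mul0mx) -?scalemxAl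
   ?(kformDl, kformDm, kformDr, kformZl, kformZm, kformZr,
     kformNl, kformNm, kformNr, kform0l, kform0m, kform0r).

Section DoubleBracket.
Variables (R : fieldType) (n : nat) (c : 'I_n -> 'I_n -> 'rV[R]_n).
Variable r : 'M[R]_n.
Local Notation kform := (kform c).

Lemma pair_coad b x a : pair b (coad (brc c) x a) = - kform a x b.
Proof.
rewrite (@lin_expand _ _ (fun b => - kform a x b)); last first.
  by move=> k y y'; rewrite kform_linr opprD mulrN.
by apply: eq_bigr => j _; rewrite mxE.
Qed.

Lemma pair_brd b a1 a2 :
  pair b (brd (brc c) r a1 a2) = kform a1 (a2 *m r) b - kform a2 (a1 *m r) b.
Proof. by rewrite /brd pairDr pairNr !pair_coad opprK addrC. Qed.

Lemma pair_coad_star b a x :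
  pair b (coad_star (brc c) r a x) = kform b (a *m r) x - kform a (b *m r) x.
Proof.
rewrite (@lin_expand _ _ (fun b => kform b (a *m r) x - kform a (b *m r) x)).
  by apply: eq_bigr => j _; rewrite mxE pairC pair_brd opprB.
move=> k y y'; rewrite kform_linl mulmxDl -scalemxAl.
by rewrite kform_linm mulrBr opprD addrACA.
Qed.

(* <(al, be), [(x, a), (y, b)]> for the bracket of the Drinfeld double. *)
Definition dbr_form (al be x a y b : 'rV[R]_n) : R :=
  kform al x y + kform al (a *m r) y - kform a (al *m r) y
  - kform al (b *m r) x + kform b (al *m r) x
  - kform b (a *m r) be + kform a (b *m r) be - kform b x be + kform a y be.

Lemma dbr_pairing (xi X Y : 'rV[R]_(n + n)) :
  pair xi (dbr (brc c) r X Y) =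
  dbr_form (lsubmx xi) (rsubmx xi) (lsubmx X) (rsubmx X) (lsubmx Y) (rsubmx Y).
Proof.
rewrite -{1}(hsubmxK xi) /dbr /= pair_rowmx !pairDr !pairNr !pair_coad_star.
by rewrite !pair_coad /dbr_form /kform /tmap; ring.
Qed.

Lemma dbr_pairing_linl xi Y : lin_form (fun X => pair xi (dbr (brc c) r X Y)).
Proof.
by move=> k X X'; rewrite !dbr_pairing !linearP /dbr_form /=; kform_expand; ring.
Qed.

Lemma dbr_pairing_linr xi X : lin_form (fun Y => pair xi (dbr (brc c) r X Y)).
Proof.
by move=> k Y Y'; rewrite !dbr_pairing !linearP /dbr_form /=; kform_expand; ring.
Qed.

Lemma cybe_triangular :
  r^T = - r -> cybe (brc c) r -> forall a1 a2 a3,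
  kform a3 (a1 *m r) (a2 *m r) =
  kform a2 (a1 *m r) (a3 *m r) - kform a1 (a2 *m r) (a3 *m r).
Proof.
move=> skew /(cybe_formE (@kform_linr _ _ c) (@kform_linm _ _ c)) cyb a1 a2 a3.
have : kform a1 (a2 *m r^T) (a3 *m r^T) + kform a2 (a1 *m r) (a3 *m r^T)
       + kform a3 (a1 *m r) (a2 *m r) = 0 by exact: cyb.
rewrite skew !mulmxN kformNm !kformNr opprK.
by move/eqP; rewrite addrC addr_eq0 opprB => /eqP.
Qed.

End DoubleBracket.

(* The tensors r~_{+,mu}, r~_{-,mu}; characteristic zero is used only to halve
   in the symmetric part. *)
Section Double.
Variables (R : numFieldType) (n : nat) (c : 'I_n -> 'I_n -> 'rV[R]_n).
Variables (r : 'M[R]_n) (mu : R).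
Hypothesis lie : is_lie (brc c).
Hypothesis skew : r^T = - r.

Local Notation dbrD := (dbr (brc c) r).

(* The matrix of B_p, which exchanges the halves g and g^*. *)
Definition swap_mx : 'M[R]_(n + n) := block_mx 0 1%:M 1%:M 0.

Lemma swap_mul (a b : 'rV[R]_n) : row_mx a b *m swap_mx = row_mx b a.
Proof. by rewrite mul_row_block !mulmx0 !mulmx1 add0r addr0. Qed.

Lemma swap_tr : swap_mx^T = swap_mx.
Proof. by rewrite tr_block_mx !trmx0 trmx1. Qed.

Lemma swap_invol : swap_mx *m swap_mx = 1%:M.
Proof.
rewrite mulmx_block !mulmx0 !mul0mx !mulmx1 !add0r !addr0.
by rewrite scalar_mx_block.
Qed.

Lemma swap_unit : swap_mx \in unitmx.
Proof. by case: (mulmx1_unit swap_invol). Qed.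

Lemma Bp_mxE : Bp_mx R n = swap_mx.
Proof.
have BpE X Y : Bp X Y = pair X (Y *m swap_mx).
  rewrite -[X]hsubmxK -[Y]hsubmxK /Bp !row_mxKl !row_mxKr swap_mul.
  by rewrite pair_rowmx addrC.
apply/matrixP => i j; rewrite mxE BpE pair_bvec /bvec -rowE mxE.
by rewrite -{1}swap_tr mxE.
Qed.

(* phi is its own inverse. *)
Lemma phi_invE xi : phi_inv xi = xi *m swap_mx.
Proof.
rewrite /phi_inv Bp_mxE; congr (_ *m _).
by rewrite -[invmx _]mul1mx -swap_invol -mulmxA mulmxV ?swap_unit // mulmx1.
Qed.

Definition rtilde_mx (sg : bool) : 'M[R]_(n + n) :=
  if sg then block_mx (mu *: r) 0 (1%:M + 1%:M) 0
  else block_mx (mu *: r) (- (1%:M + 1%:M)) 0 0.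

Lemma rtilde_mapE sg xi : rtilde_map r mu sg xi = xi *m rtilde_mx sg.
Proof.
rewrite /rtilde_map phi_invE /Rmu /tmap -[xi]hsubmxK swap_mul row_mxKl row_mxKr.
rewrite /rtilde_mx; case: sg; rewrite mul_row_block !mulmx0 ?addr0 -scalemxAr.
  by rewrite add_row_mx addNr mulmxDr mulmx1 addrA.
by rewrite opp_row_mx add_row_mx mulmxN mulmxDr mulmx1 addrK opprD.
Qed.

Lemma tensor_rtilde sg : tensor_of (rtilde_map r mu sg) = rtilde_mx sg.
Proof. by apply/matrixP => i j; rewrite mxE rtilde_mapE /bvec -rowE mxE. Qed.

Lemma rtilde_mul sg (a b : 'rV[R]_n) : row_mx a b *m rtilde_mx sg =
  if sg then row_mx (mu *: (a *m r) + (b + b)) 0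
  else row_mx (mu *: (a *m r)) (- (a + a)).
Proof.
rewrite /rtilde_mx; case: sg; rewrite mul_row_block !mulmx0 ?mul0mx !addr0.
  by rewrite -scalemxAr mulmxDr mulmx1.
by rewrite -scalemxAr mulmxN mulmxDr mulmx1.
Qed.

Lemma rtilde_tr_mul sg (a b : 'rV[R]_n) : row_mx a b *m (rtilde_mx sg)^T =
  if sg then row_mx (- (mu *: (a *m r))) (a + a)
  else row_mx (- (mu *: (a *m r)) - (b + b)) 0.
Proof.
rewrite /rtilde_mx; case: sg; rewrite tr_block_mx !trmx0 linearZ /= skew.
  rewrite mul_row_block !mulmx0 !addr0 -scalemxAr mulmxN scalerN.
  by rewrite linearD /= trmx1 mulmxDr mulmx1.
rewrite mul_row_block !mulmx0 !addr0 -scalemxAr mulmxN scalerN.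
by rewrite linearN linearD /= trmx1 mulmxN mulmxDr mulmx1.
Qed.

Hypothesis cyb : cybe (brc c) r.

(* After expanding everything in kform, the only relations needed are
   cybe_triangular and five instances of antisymmetry. *)
Lemma rtilde_cybe_form sg x1 x2 x3 : cybe_form dbrD (rtilde_mx sg) x1 x2 x3 = 0.
Proof.
rewrite -[x1]hsubmxK -[x2]hsubmxK -[x3]hsubmxK /cybe_form.
set a1 := lsubmx x1; set b1 := rsubmx x1; set a2 := lsubmx x2.
set b2 := rsubmx x2; set a3 := lsubmx x3; set b3 := rsubmx x3.
have cyb_r := cybe_triangular skew cyb a1 a2 a3.
have anti := kform_anti lie.
case: sg; rewrite !rtilde_mul !rtilde_tr_mul !dbr_pairing !row_mxKl !row_mxKr
  /dbr_form; kform_expand.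
- rewrite (anti a2 b1 (a3 *m r)) (anti a3 b1 (a2 *m r)) (anti a1 (a3 *m r) (a2 *m r)).
  rewrite (anti a2 (a3 *m r) (a1 *m r)) (anti a3 (a2 *m r) (a1 *m r)) cyb_r.
  ring.
- rewrite (anti a1 b2 (a3 *m r)) (anti a1 b3 b2) (anti a1 (a3 *m r) (a2 *m r)).
  rewrite (anti a2 (a3 *m r) (a1 *m r)) (anti a3 (a2 *m r) (a1 *m r)) cyb_r.
  ring.
Qed.

Lemma rtilde_cybe sg : cybe dbrD (rtilde_mx sg).
Proof.
apply/(cybe_formE (@dbr_pairing_linr _ _ c r) (@dbr_pairing_linl _ _ c r)).
exact: rtilde_cybe_form.
Qed.

(* ad-invariance of B_p: for Y = phi^-1 eta and Z = phi^-1 xi this reads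
   B_p(Z, [X, Y]) + B_p(Y, [X, Z]) = 0. *)
Lemma Bp_ad_invariant xi eta X :
  pair xi (dbrD X (eta *m swap_mx)) + pair eta (dbrD X (xi *m swap_mx)) = 0.
Proof.
rewrite -[xi]hsubmxK -[eta]hsubmxK -[X]hsubmxK !swap_mul !dbr_pairing.
rewrite !row_mxKl !row_mxKr /dbr_form (kform_anti lie (rsubmx X) (rsubmx eta)).
ring.
Qed.

(* The Casimir element of B_p is invariant. *)
Lemma swap_invariant : Defs.invariant dbrD swap_mx.
Proof.
move=> X; apply/matrixP => p q.
rewrite (ad_act_pairing (@dbr_pairing_linr _ _ c r)) swap_tr mxE.
exact: Bp_ad_invariant.
Qed.

Lemma symp_rtilde sg : symp (rtilde_mx sg) = (if sg then 1 else -1) *: swap_mx.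
Proof.
have half2 : ((2%:R)^-1 + (2%:R)^-1 : R) = 1 by rewrite {3}(splitr 1) mul1r.
have tr2 : (1%:M + 1%:M : 'M[R]_n)^T = 1%:M + 1%:M by rewrite linearD /= trmx1.
rewrite /symp /rtilde_mx; case: sg; rewrite tr_block_mx !trmx0 linearZ /= skew.
  rewrite add_block_mx scalerN addrN !addr0 add0r tr2 scale_block_mx !scaler0.
  by rewrite scalerDr -scalerDl half2 !scale1r.
rewrite add_block_mx scalerN addrN !addr0 add0r linearN /= tr2 scale_block_mx.
by rewrite !scaler0 scalerN scalerDr -scalerDl half2 !scale1r scale_block_mx
  !scaler0 scaleN1r.
Qed.

End Double.

Theorem proposition4p9 (R : realFieldType) (n : nat)
  (c : 'I_n -> 'I_n -> 'rV[R]_n) (r : 'M[R]_n) (mu : R) (sg : bool) :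
  is_lie (brc c) ->
  r^T = - r ->
  cybe (brc c) r ->
  factorizable_qt (dbr (brc c) r) (tensor_of (rtilde_map r mu sg)).
Proof.
move=> lie skew cyb; rewrite tensor_rtilde; split.
- exact: rtilde_cybe.
- by rewrite symp_rtilde //; apply/invariantZ/swap_invariant.
- by rewrite symp_rtilde // unitmxZ ?swap_unit //; case: sg; rewrite ?unitrN1 ?unitr1.
Qed.
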